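(* For any $x\in\mathbb{R}^n$ and $0<\delta<2$, with $z=x-\delta(a_{i^*}^Tx-b_{i^*})^+a_{i^*}$ (where $i^*$ is selected at $x$), $$\mathbb{E}_{\mathbb{S}}[d(z,P)^2]\le\mathbb{E}_{\mathbb{S}}\big[\|x-\mathcal{P}(x)-\delta(a_{i^*}^Tx-b_{i^*})^+a_{i^*}\|^2\big]\le h(\delta)\,d(x,P)^2,$$ where $\eta=2\delta-\delta^2$ and $h(\delta)=1-\eta\mu_1<1$.
   Context: Let $A\in\mathbb{R}^{m\times n}$ have rows $a_1^T,\dots,a_m^T$ with $\|a_i\|_2=1$, and $b\in\mathbb{R}^m$; assume $Ax\le b$ is consistent and let $P=\{x:Ax\le b\}$, $\mathcal{P}(x)$ the Euclidean projection onto $P$, $d(x,P)=\|x-\mathcal{P}(x)\|$, $t^+=\max\{t,0\}$. Fix an integer $1\le\beta\le m$. Sampling distribution $\mathbb{S}$ at $x$: $\tau\subseteq\{1,\dots,m\}$ with $|\tau|=\beta$ uniformly at random, and $i^*\in\tau$ maximizing $(a_i^Tx-b_i)^+$ over $\tau$; $\mathbb{E}_{\mathbb{S}}$ is expectation over $\tau$. $L>0$ is a Hoffman constant ($d(x,P)^2\le L^2\|(Ax-b)^+\|^2$ for all $x$); $\mu_1=\frac1{mL^2}$. *)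

(* Vectors in R^n are row vectors 'rV[R]_n; A : 'M[R]_(m,n), b : 'cV[R]_m. *)
From mathcomp Require Import all_boot all_order all_algebra.
Set Implicit Arguments. Unset Strict Implicit. Unset Printing Implicit Defensive.
Import Order.TTheory GRing.Theory Num.Theory.
Local Open Scope ring_scope.

Definition dotv (R : realFieldType) (n : nat) (u v : 'rV[R]_n) : R :=
  \sum_(j < n) u 0 j * v 0 j.
Definition sqnorm (R : realFieldType) (n : nat) (u : 'rV[R]_n) : R := dotv u u.

Definition pospart (R : realFieldType) (t : R) : R := Num.max t 0.

Definition resid (R : realFieldType) (m n : nat) (A : 'M[R]_(m, n)) (b : 'cV[R]_m)
  (x : 'rV[R]_n) (i : 'I_m) : R := dotv (row i A) x - b i 0.

Definition inP (R : realFieldType) (m n : nat) (A : 'M[R]_(m, n)) (b : 'cV[R]_m)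
  (x : 'rV[R]_n) : Prop := forall i, resid A b x i <= 0.

Definition viol2 (R : realFieldType) (m n : nat) (A : 'M[R]_(m, n)) (b : 'cV[R]_m)
  (x : 'rV[R]_n) : R := \sum_(i < m) pospart (resid A b x i) ^+ 2.

Definition is_projection (R : realFieldType) (m n : nat) (A : 'M[R]_(m, n))
  (b : 'cV[R]_m) (proj : 'rV[R]_n -> 'rV[R]_n) : Prop :=
  forall x, inP A b (proj x) /\
    forall y, inP A b y -> sqnorm (x - proj x) <= sqnorm (x - y).

Definition dist2 (R : realFieldType) (n : nat) (proj : 'rV[R]_n -> 'rV[R]_n)
  (x : 'rV[R]_n) : R := sqnorm (x - proj x).

(* expectation over tau uniformly distributed among subsets of size beta *)
Definition Esamp (R : realFieldType) (m beta : nat) (f : {set 'I_m} -> R) : R :=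
  (\sum_(tau : {set 'I_m} | #|tau| == beta) f tau)
    / (#|[set tau : {set 'I_m} | #|tau| == beta]|)%:R.

Definition is_selection (R : realFieldType) (m n : nat) (A : 'M[R]_(m, n))
  (b : 'cV[R]_m) (beta : nat) (x : 'rV[R]_n) (sel : {set 'I_m} -> 'I_m) : Prop :=
  forall tau : {set 'I_m}, #|tau| = beta ->
    sel tau \in tau /\
    forall i, i \in tau -> pospart (resid A b x i) <= pospart (resid A b x (sel tau)).

(** The relaxed projection onto the violated half-space selected at x moves
    x - P(x) towards the polyhedron: since P(x) satisfies a_i^T P(x) <= b_i,
    the squared distance to P(x) drops by at least (2 delta - delta^2) times
    the squared violation of the selected row.  The selected row carries the
    largest violation in tau, so its squared violation dominates the average
    over tau; averaging over uniformly drawn tau, every row lies in the same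
    fraction beta/m of the draws, so the expected decrease is at least
    (2 delta - delta^2) ||(Ax - b)^+||^2 / m, which the Hoffman bound turns into
    (2 delta - delta^2) d(x, P)^2 / (m L^2). *)

From mathcomp Require Import all_boot all_order all_algebra all_fingroup.
From mathcomp Require Import ring lra.

Set Implicit Arguments.
Unset Strict Implicit.
Unset Printing Implicit Defensive.
Import Order.TTheory GRing.Theory Num.Theory.
Local Open Scope ring_scope.

Lemma pospart_ge0 (R : realFieldType) (t : R) : 0 <= pospart t.
Proof. by rewrite /pospart le_max lexx orbT. Qed.

Lemma dotvB (R : realFieldType) n (a u v : 'rV[R]_n) :
  dotv a (u - v) = dotv a u - dotv a v.
Proof. by rewrite /dotv -sumrB; apply: eq_bigr => j _; rewrite !mxE mulrBr. Qed.

Lemma sqnormB_scale (R : realFieldType) n (u a : 'rV[R]_n) (c : R) :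
  sqnorm (u - c *: a) = sqnorm u - 2 * c * dotv a u + c ^+ 2 * sqnorm a.
Proof.
rewrite /sqnorm /dotv !mulr_sumr -sumrB -big_split /=.
by apply: eq_bigr => j _; rewrite !mxE; ring.
Qed.

Lemma sqnorm_relaxed_halfspace_step (R : realFieldType) n (a u p : 'rV[R]_n)
    (c delta : R) :
  sqnorm a = 1 -> dotv a p <= c -> 0 <= delta ->
  sqnorm (u - p - (delta * pospart (dotv a u - c)) *: a)
    <= sqnorm (u - p) - (2 * delta - delta ^+ 2) * pospart (dotv a u - c) ^+ 2.
Proof.
move=> a1 pc delta0; rewrite sqnormB_scale a1 mulr1 dotvB /pospart.
have [viol|sat] := lerP 0 (dotv a u - c).
  have gap : 0 <= delta * (dotv a u - c) * (c - dotv a p).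
    by rewrite mulr_ge0 ?mulr_ge0 // subr_ge0.
  nra.
by lra.
Qed.

Section DrawsContaining.

Variables (T : finType) (k : nat).

Local Notation draws := [set tau : {set T} | #|tau| == k].

Definition draws_with (i : T) : nat :=
  (\sum_(tau : {set T} | #|tau| == k) (i \in tau))%N.

Lemma draws_with_const (i j : T) : draws_with i = draws_with j.
Proof.
have swap_inj : injective (fun tau : {set T} => tperm i j @^-1: tau).
  move=> t1 t2 /setP E; apply/setP => y.
  by have := E (tperm i j y); rewrite !inE tpermK.
rewrite /draws_with (reindex_inj swap_inj) /=.
apply: eq_big => [tau|tau _]; last by rewrite inE tpermL.
by rewrite card_preimset //; apply: perm_inj.
Qed.

Lemma sum_draws_with : (\sum_i draws_with i = k * #|draws|)%N.
Proof.
rewrite /draws_with exchange_big /= cardsE mulnC -sum_nat_const.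
apply: eq_bigr => tau /eqP <-; rewrite -sum1_card [RHS]big_mkcond /=.
by apply: eq_bigr => i _; case: (i \in tau).
Qed.

Lemma card_mul_draws_with (i : T) : (#|T| * draws_with i = k * #|draws|)%N.
Proof.
rewrite -sum_draws_with -sum_nat_const.
by apply: eq_bigr => j _; apply: draws_with_const.
Qed.

Lemma sum_draws_sum_in (R : realFieldType) (g : T -> R) :
  \sum_(tau : {set T} | #|tau| == k) \sum_(i in tau) g i
  = \sum_i g i * (draws_with i)%:R.
Proof.
under eq_bigr => tau _ do rewrite big_mkcond /=.
rewrite exchange_big /=; apply: eq_bigr => i _.
rewrite /draws_with natr_sum mulr_sumr; apply: eq_bigr => tau _.
by case: (i \in tau); rewrite ?mulr1 ?mulr0.
Qed.

End DrawsContaining.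

Section Sampling.

Variables (R : realFieldType) (m beta : nat).
Hypothesis beta_le_m : (beta <= m)%N.

Local Notation draws := [set tau : {set 'I_m} | #|tau| == beta].

Lemma card_draws_neq0 : #|draws|%:R != 0 :> R.
Proof. by rewrite pnatr_eq0 card_draws card_ord -lt0n bin_gt0. Qed.

Lemma Esamp_cst (c : R) : Esamp beta (fun _ : {set 'I_m} => c) = c.
Proof.
rewrite /Esamp sumr_const -[c *+ _]mulr_natr (_ : #|_| = #|draws|).
  by rewrite mulfK ?card_draws_neq0.
by rewrite cardsE.
Qed.

Lemma EsampB (f g : {set 'I_m} -> R) :
  Esamp beta (fun tau => f tau - g tau) = Esamp beta f - Esamp beta g.
Proof. by rewrite /Esamp sumrB mulrBl. Qed.

Lemma EsampZ (c : R) (f : {set 'I_m} -> R) :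
  Esamp beta (fun tau => c * f tau) = c * Esamp beta f.
Proof. by rewrite /Esamp -mulr_sumr mulrA. Qed.

Lemma ler_Esamp (f g : {set 'I_m} -> R) :
  (forall tau : {set 'I_m}, #|tau| = beta -> f tau <= g tau) ->
  Esamp beta f <= Esamp beta g.
Proof.
move=> fg; rewrite /Esamp ler_wpM2r ?invr_ge0 ?ler0n //.
by apply: ler_sum => tau /eqP /fg.
Qed.

Lemma Esamp_sum_in (g : 'I_m -> R) : (0 < m)%N ->
  Esamp beta (fun tau => \sum_(i in tau) g i) = beta%:R / m%:R * \sum_i g i.
Proof.
move=> m_gt0; have m0 : m%:R != 0 :> R by rewrite pnatr_eq0 -lt0n.
have C0 := card_draws_neq0.
have draws_withE (i : 'I_m) :
    (draws_with beta i)%:R = beta%:R * #|draws|%:R / m%:R :> R.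
  by rewrite -natrM -(card_mul_draws_with beta i) card_ord natrM mulrC mulKf.
rewrite /Esamp sum_draws_sum_in.
under eq_bigr => i _ do rewrite draws_withE.
by rewrite -mulr_suml; field; exact/andP.
Qed.

End Sampling.

Lemma sum_violation_le_selected (R : realFieldType) m n (A : 'M[R]_(m, n))
    (b : 'cV[R]_m) beta x sel :
  is_selection A b beta x sel -> forall tau : {set 'I_m}, #|tau| = beta ->
  \sum_(i in tau) pospart (resid A b x i) ^+ 2
    <= beta%:R * pospart (resid A b x (sel tau)) ^+ 2.
Proof.
move=> selP tau tau_beta; have [_ sel_max] := selP tau tau_beta.
rewrite -tau_beta -sum1_card natr_sum mulr_suml; apply: ler_sum => i i_tau.
by rewrite mul1r ler_pXn2r ?nnegrE ?pospart_ge0 ?sel_max.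
Qed.

Lemma Esamp_selected_violation_ge (R : realFieldType) m n (A : 'M[R]_(m, n))
    (b : 'cV[R]_m) beta x sel :
  (0 < beta)%N -> (beta <= m)%N -> is_selection A b beta x sel ->
  viol2 A b x / m%:R
    <= Esamp beta (fun tau => pospart (resid A b x (sel tau)) ^+ 2).
Proof.
move=> beta_gt0 beta_le_m selP.
have m_gt0 : (0 < m)%N by apply: leq_trans beta_le_m.
have := ler_Esamp (sum_violation_le_selected selP).
by rewrite Esamp_sum_in // EsampZ mulrAC -mulrA ler_pM2l ?ltr0n.
Qed.

Theorem lemma9 (R : realFieldType) (m n beta : nat)
  (A : 'M[R]_(m, n)) (b : 'cV[R]_m) (proj : 'rV[R]_n -> 'rV[R]_n) (L : R)
  (x : 'rV[R]_n) (delta : R) (sel : {set 'I_m} -> 'I_m) :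
  (forall i : 'I_m, sqnorm (row i A) = 1) ->
  (exists y : 'rV[R]_n, inP A b y) ->
  is_projection A b proj ->
  (1 <= beta)%N -> (beta <= m)%N ->
  0 < L ->
  (forall y : 'rV[R]_n, dist2 proj y <= L ^+ 2 * viol2 A b y) ->
  0 < delta -> delta < 2 ->
  is_selection A b beta x sel ->
  let zstep := fun tau : {set 'I_m} =>
    (delta * pospart (resid A b x (sel tau))) *: row (sel tau) A in
  let h := 1 - (2 * delta - delta ^+ 2) * (1 / (m%:R * L ^+ 2)) in
  Esamp beta (fun tau => dist2 proj (x - zstep tau))
    <= Esamp beta (fun tau => sqnorm (x - proj x - zstep tau))
  /\ Esamp beta (fun tau => sqnorm (x - proj x - zstep tau)) <= h * dist2 proj x
  /\ h < 1.
Proof.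
move=> unit_rows _ projP beta_gt0 beta_le_m L_gt0 hoffman delta_gt0 delta_lt2
  selP zstep h.
have m_gt0 : (0 < m)%N by apply: leq_trans beta_le_m.
have mL2_gt0 : 0 < m%:R * L ^+ 2 by rewrite mulr_gt0 ?ltr0n ?exprn_gt0.
set eta := 2 * delta - delta ^+ 2.
have eta_gt0 : 0 < eta by rewrite /eta expr2; nra.
split.
  apply: ler_Esamp => tau _; rewrite /dist2 (addrAC x (- proj x)).
  exact: (projP _).2 _ (projP x).1.
split; last first.
  by have := mulr_gt0 eta_gt0 (divr_gt0 ltr01 mL2_gt0); rewrite /h -/eta; lra.
apply: (@le_trans _ _ (Esamp beta (fun tau =>
  dist2 proj x - eta * pospart (resid A b x (sel tau)) ^+ 2))).
  apply: ler_Esamp => tau _; apply: sqnorm_relaxed_halfspace_step.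
  - exact: unit_rows.
  - by rewrite -subr_le0; apply: (projP x).1.
  - exact: ltW.
rewrite EsampB Esamp_cst // EsampZ.
have hoffman_avg : dist2 proj x * (1 / (m%:R * L ^+ 2)) <= viol2 A b x / m%:R.
  by rewrite mul1r ler_pdivrMr // mulrA divfK ?pnatr_eq0 -?lt0n // mulrC.
have gain : eta * (dist2 proj x * (1 / (m%:R * L ^+ 2)))
    <= eta * Esamp beta (fun tau => pospart (resid A b x (sel tau)) ^+ 2).
  rewrite ler_wpM2l ?(ltW eta_gt0) //; apply: le_trans hoffman_avg _.
  exact: Esamp_selected_violation_ge.
by rewrite /h -/eta; lra.
Qed.
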